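(* The Weighted Covering VCCR satisfies Positive Involvement in Defeat: for every linear profile $\mathbf P$ and $x,y\in X(\mathbf P)$, if $(x,y)\notin wc(\mathbf P)$ and $\mathbf P'$ is obtained from $\mathbf P$ by adding one new voter whose ballot ranks $y$ above $x$, then $(x,y)\notin wc(\mathbf P')$.
   Context: Profiles: $\mathbf P:V\to\mathcal L(X)$, $V$ nonempty finite set of voters, $X=X(\mathbf P)$ nonempty finite set of candidates, $\mathcal L(X)$ strict linear orders. $\mathrm{Margin}_{\mathbf P}(x,y)$ = #voters ranking $x$ above $y$ minus #ranking $y$ above $x$. Weighted Covering: $(x,y)\in wc(\mathbf P)$ iff $\mathrm{Margin}_{\mathbf P}(x,y)>0$ and $\mathrm{Margin}_{\mathbf P}(x,z)\ge\mathrm{Margin}_{\mathbf P}(y,z)$ for all $z\in X(\mathbf P)$. *)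

From mathcomp Require Import all_boot all_order all_algebra.
Set Implicit Arguments. Unset Strict Implicit. Unset Printing Implicit Defensive.
Import Order.TTheory GRing.Theory Num.Theory.
Local Open Scope ring_scope.

(* A ballot is a boolean relation [r] on the finite candidate type [X];
   [r a b] reads "a is ranked strictly above b". *)
Definition strict_linear_order (X : finType) (r : rel X) : Prop :=
  [/\ forall a, ~~ r a a,
      forall a b c, r a b -> r b c -> r a c
    & forall a b, a != b -> r a b || r b a].

(* A profile is a map P : V -> rel X (each value a strict linear order,
   imposed as a hypothesis); voters V and candidates X are finite types. *)
Definition margin (X V : finType) (P : V -> rel X) (a b : X) : int :=
  (#|[set v | P v a b]|)%:Z - (#|[set v | P v b a]|)%:Z.

Definition wc (X V : finType) (P : V -> rel X) (a b : X) : Prop :=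
  0 < margin P a b /\ forall z : X, margin P b z <= margin P a z.

Definition add_voter (X V : finType) (P : V -> rel X) (b : rel X) :
  option V -> rel X :=
  fun o => match o with Some v => P v | None => b end.

From mathcomp Require Import all_boot all_order all_algebra.
From mathcomp Require Import zify.
Set Implicit Arguments. Unset Strict Implicit. Unset Printing Implicit Defensive.
Import Order.TTheory GRing.Theory Num.Theory.

(* The new voter shifts every margin [margin P a c] by the ballot's net
   preference [[b a c] - [b c a]].  Along a ballot that ranks [y] above [x]
   this shift is monotone: against every [z], [y] gains at least as much as
   [x], and against [y] itself [x] gains nothing.  So if [(x, y)] is in
   [wc] after the voter is added, removing the voter again keeps the margin
   of [x] over [y] positive and keeps [x]'s margins above [y]'s. *)

Local Open Scope ring_scope.

Definition ballot_margin (X : finType) (b : rel X) (a c : X) : int :=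
  (b a c : nat)%:Z - (b c a : nat)%:Z.

Lemma ballot_margin_mono (X : finType) (b : rel X) (x y z : X) :
  irreflexive b -> transitive b -> b y x ->
  ballot_margin b x z <= ballot_margin b y z.
Proof.
move=> irr tr byx; rewrite /ballot_margin.
have asym a c : b a c -> b c a = false.
  by move=> bac; apply/negbTE/negP => /(tr _ _ _ bac); rewrite irr.
case bxz: (b x z).
  by have byz := tr _ _ _ byx bxz; rewrite byz (asym _ _ byz); case: (b z x).
case bzy: (b z y); first by rewrite (tr _ _ _ bzy byx); case: (b y z).
by case: (b z x); case: (b y z).
Qed.

Lemma card_set_option (V : finType) (f : pred (option V)) :
  #|[set o | f o]| = (f None + #|[set v | f (Some v)]|)%N.
Proof.
rewrite (cardsD1 None) inE -(card_imset [set v | f (Some v)] (@Some_inj _)).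
congr (_ + _)%N; apply: eq_card => -[v|] /=; rewrite !inE.
  by rewrite (mem_imset _ _ (@Some_inj _)) inE.
by apply/esym/negP => /imsetP [v _].
Qed.

Lemma margin_add_voter (X V : finType) (P : V -> rel X) (b : rel X) (a c : X) :
  margin (add_voter P b) a c = margin P a c + ballot_margin b a c.
Proof. by rewrite /margin /ballot_margin !card_set_option /= !PoszD; lia. Qed.

Lemma wc_remove_voter (X V : finType) (P : V -> rel X) (b : rel X) (x y : X) :
  irreflexive b -> transitive b -> b y x ->
  wc (add_voter P b) x y -> wc P x y.
Proof.
move=> irr tr byx [pos_xy cover_xy]; split.
  have := ballot_margin_mono y irr tr byx.
  by move: pos_xy; rewrite margin_add_voter /ballot_margin; lia.
move=> z; have := ballot_margin_mono z irr tr byx.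
by move: (cover_xy z); rewrite !margin_add_voter; lia.
Qed.

Theorem proposition3p16 (X V : finType) (P : V -> rel X) (x y : X) (b : rel X) :
  (0 < #|X|)%N -> (0 < #|V|)%N ->
  (forall v, strict_linear_order (P v)) ->
  strict_linear_order b -> b y x ->
  ~ wc P x y -> ~ wc (add_voter P b) x y.
Proof.
move=> _ _ _ [irr tr _] byx not_wc wc_add; apply: not_wc.
apply: (wc_remove_voter _ _ byx wc_add).
  by move=> a; apply/negbTE/irr.
by move=> a' a c; apply: tr.
Qed.
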